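(* Let $n\ge1$, let $\mathbf{Q}\in\mathbb{R}^{n\times n}$ be symmetric, $\mathbf{c}\in\mathbb{R}^n$, $\mathbf{v}\in\mathbb{R}^n_+$, $V_c>0$. Let $\mathcal{Z}_a=\{\mathbf{z}\in\{0,1\}^n:\ \mathbf{v}^T\mathbf{z}\le V_c\}$, $\mathcal{Z}_b=\{\mathbf{z}\in\mathbb{R}^n:\ \mathbf{v}^T\mathbf{z}\le V_c\}$, $P_q(\mathbf{z})=\tfrac12\mathbf{z}^T\mathbf{Q}\mathbf{z}-\mathbf{c}^T\mathbf{z}$, and for $\beta>0$, $P_\beta(\mathbf{z})=P_q(\mathbf{z})+\tfrac12\beta\|\mathbf{z}\circ\mathbf{z}-\mathbf{z}\|^2$. For $\boldsymbol{\zeta}=(\boldsymbol{\sigma},\tau)$ put $\mathbf{G}(\boldsymbol{\sigma})=\mathbf{Q}+2\,\mathrm{Diag}(\boldsymbol{\sigma})$, $\boldsymbol{\psi}(\boldsymbol{\zeta})=\mathbf{c}-\tau\mathbf{v}+\boldsymbol{\sigma}$, $\mathcal{S}_a^+=\{(\boldsymbol{\sigma},\tau)\in\mathbb{R}^{n+1}:\ \mathbf{G}(\boldsymbol{\sigma})\succ0,\ \tau>0\}$, $$\Xi_\beta(\mathbf{z},\boldsymbol{\zeta})=\tfrac12\mathbf{z}^T\mathbf{G}(\boldsymbol{\sigma})\mathbf{z}-\tfrac12\beta^{-1}\|\boldsymbol{\sigma}\|^2-\mathbf{z}^T\boldsymbol{\psi}(\boldsymbol{\zeta})-\tau V_c,$$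 $$P^d_\beta(\boldsymbol{\zeta})=-\tfrac12\boldsymbol{\psi}(\boldsymbol{\zeta})^T\mathbf{G}(\boldsymbol{\sigma})^{-1}\boldsymbol{\psi}(\boldsymbol{\zeta})-\tfrac12\beta^{-1}\|\boldsymbol{\sigma}\|^2-\tau V_c,\qquad P^d_q(\boldsymbol{\zeta})=-\tfrac12\boldsymbol{\psi}(\boldsymbol{\zeta})^T\mathbf{G}(\boldsymbol{\sigma})^{-1}\boldsymbol{\psi}(\boldsymbol{\zeta})-\tau V_c .$$ For any $\beta>0$, if $\boldsymbol{\zeta}_\beta=(\boldsymbol{\sigma}_\beta,\tau_\beta)\in\mathcal{S}_a^+$ is a solution of $\max\{P^d_\beta(\boldsymbol{\zeta}):\boldsymbol{\zeta}\in\mathcal{S}_a^+\}$, then $\mathbf{z}_\beta=\mathbf{G}(\boldsymbol{\sigma}_\beta)^{-1}\boldsymbol{\psi}(\boldsymbol{\zeta}_\beta)$ is a global minimizer of $P_\beta$ over $\mathcal{Z}_b$. Moreover, there exists $\beta_c>0$ such that if $\beta\ge\beta_c$ and $\mathbf{z}_\beta\in\mathcal{Z}_a$, then $\mathbf{z}_\beta$ is a global minimizer of $P_q$ over $\mathcal{Z}_a$ and $$P_q(\mathbf{z}_\beta)=\min_{\mathbf{z}\in\mathcal{Z}_b}P_\beta(\mathbf{z})=\Xi_\beta(\mathbf{z}_\beta,\boldsymbol{\zeta}_\beta)=\max_{\boldsymbol{\zeta}\in\mathcal{S}_a^+}P^d_\beta(\boldsymbol{\zeta})=P^d_q(\bo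ldsymbol{\zeta}_\beta).$$
   Context: $\mathbf{z}\circ\mathbf{z}=\{z_i^2\}$ is the componentwise square; $\mathrm{Diag}(\boldsymbol{\sigma})$ is the diagonal matrix with diagonal $\boldsymbol{\sigma}$. The problem $\min\{P_q(\mathbf{z}):\mathbf{z}\in\mathcal{Z}_a\}$ is the quadratic knapsack problem. *)

From HB Require Import structures.
From mathcomp Require Import all_boot all_order all_algebra.
From mathcomp Require Import reals.
Set Implicit Arguments. Unset Strict Implicit. Unset Printing Implicit Defensive.
Import Order.TTheory GRing.Theory Num.Theory.
Local Open Scope ring_scope.

Section Defs.
Variable R : realType.
Variable n : nat.

Definition dotv (u w : 'cV[R]_n) : R := \sum_(i < n) u i 0 * w i 0.

Definition qform (A : 'M[R]_n) (z : 'cV[R]_n) : R := (z^T *m A *m z) 0 0.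

Definition posdef (A : 'M[R]_n) : Prop := forall x : 'cV[R]_n, x != 0 -> 0 < qform A x.

Definition sqsub (z : 'cV[R]_n) : 'cV[R]_n := \col_i (z i 0 ^+ 2 - z i 0).

Definition Pq (Q : 'M[R]_n) (c z : 'cV[R]_n) : R := 2^-1 * qform Q z - dotv c z.

Definition Pbeta (Q : 'M[R]_n) (c : 'cV[R]_n) (beta : R) (z : 'cV[R]_n) : R :=
  Pq Q c z + 2^-1 * beta * dotv (sqsub z) (sqsub z).

Definition Gm (Q : 'M[R]_n) (sigma : 'cV[R]_n) : 'M[R]_n := Q + 2%:R *: diag_mx sigma^T.

Definition psi (c v sigma : 'cV[R]_n) (tau : R) : 'cV[R]_n := c - tau *: v + sigma.

Definition Saplus (Q : 'M[R]_n) (sigma : 'cV[R]_n) (tau : R) : Prop :=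
  posdef (Gm Q sigma) /\ 0 < tau.

Definition Za (v : 'cV[R]_n) (Vc : R) (z : 'cV[R]_n) : Prop :=
  (forall i, z i 0 = 0 \/ z i 0 = 1) /\ dotv v z <= Vc.

Definition Zb (v : 'cV[R]_n) (Vc : R) (z : 'cV[R]_n) : Prop := dotv v z <= Vc.

Definition Xi (Q : 'M[R]_n) (c v : 'cV[R]_n) (Vc beta : R)
    (z sigma : 'cV[R]_n) (tau : R) : R :=
  2^-1 * qform (Gm Q sigma) z - 2^-1 * beta^-1 * dotv sigma sigma
  - dotv z (psi c v sigma tau) - tau * Vc.

Definition Pdbeta (Q : 'M[R]_n) (c v : 'cV[R]_n) (Vc beta : R)
    (sigma : 'cV[R]_n) (tau : R) : R :=
  - 2^-1 * qform (invmx (Gm Q sigma)) (psi c v sigma tau)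
  - 2^-1 * beta^-1 * dotv sigma sigma - tau * Vc.

Definition Pdq (Q : 'M[R]_n) (c v : 'cV[R]_n) (Vc : R)
    (sigma : 'cV[R]_n) (tau : R) : R :=
  - 2^-1 * qform (invmx (Gm Q sigma)) (psi c v sigma tau) - tau * Vc.

Definition zsol (Q : 'M[R]_n) (c v sigma : 'cV[R]_n) (tau : R) : 'cV[R]_n :=
  invmx (Gm Q sigma) *m psi c v sigma tau.

End Defs.

(* Completing the square in [z] gives
     Xi(z, zeta) = P^d_beta(zeta) + 1/2 (z - z(zeta))^T G(sigma) (z - z(zeta)),
   with z(zeta) = G(sigma)^-1 psi(zeta), so P^d_beta(zeta) = min_z Xi(z, zeta).
   Comparing P^d_beta at its maximizer zeta_beta with nearby points of the open
   set S_a^+ (moving tau, or one coordinate of sigma) gives, by a first-order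
   argument, v^T z_beta = Vc and sigma_beta = beta (z_beta o z_beta - z_beta).
   These make Xi(z_beta, zeta_beta) = P_beta(z_beta), whereas
   Xi(z, zeta_beta) <= P_beta(z) on Z_b (weak duality).  Hence
     P_beta(z_beta) = P^d_beta(zeta_beta) <= Xi(z, zeta_beta) <= P_beta(z).
   When z_beta is binary the penalty vanishes, so sigma_beta = 0 and P_q agrees
   with P_beta on Z_a, which gives the second part for every beta > 0. *)

From HB Require Import structures.
From mathcomp Require Import all_boot all_order all_algebra.
From mathcomp Require Import reals ring lra.
Import Order.TTheory GRing.Theory Num.Theory.
Set Implicit Arguments. Unset Strict Implicit. Unset Printing Implicit Defensive.
Local Open Scope ring_scope.

Section RealFacts.
Variable R : realType.

Lemma le0_of_lin_le_sqr (d K E : R) :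
  0 < d -> (forall t, 0 < t <= d -> t * E <= t ^+ 2 * K) -> E <= 0.
Proof.
move=> hd hE; rewrite leNgt; apply/negP => E_gt0.
have hK : 0 <= `|K| := normr_ge0 K.
set D := E + d * (`|K| + 1).
have D_gt0 : 0 < D by rewrite /D; nra.
set t := d * E / D.
have htD : t * D = d * E by rewrite /t divfK // gt_eqF.
have t_gt0 : 0 < t by rewrite /t divr_gt0 // mulr_gt0.
have t_le_d : t <= d by rewrite -(ler_pM2r D_gt0) htD /D; nra.
have : E <= t * `|K|.
  rewrite -(ler_pM2l t_gt0) mulrA -expr2.
  apply: le_trans (hE t _) _; first by rewrite t_gt0.
  by rewrite ler_pM2l ?exprn_gt0 // ler_norm.
rewrite -(ler_pM2r D_gt0) mulrAC htD /D; nra.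
Qed.

Lemma eq0_of_lin_le_sqr (d K E : R) :
  0 < d -> (forall t, -d <= t <= d -> t * E <= t ^+ 2 * K) -> E = 0.
Proof.
move=> hd hE; apply/le_anti/andP; split.
  apply: (le0_of_lin_le_sqr hd) => t /andP[t_gt0 t_le_d].
  by apply: hE; rewrite t_le_d andbT; lra.
rewrite -oppr_le0; apply: (le0_of_lin_le_sqr hd) => t /andP[t_gt0 t_le_d].
by have := hE (- t); rewrite sqrrN mulNr -mulrN; apply; lra.
Qed.

End RealFacts.

Section InnerProduct.
Variables (R : realType) (n : nat).
Implicit Types (u w x : 'cV[R]_n).

Lemma dotvE u w : dotv u w = (u^T *m w) 0 0.
Proof. by rewrite /dotv mxE; apply: eq_bigr => i _; rewrite mxE. Qed.

Lemma dotvC u w : dotv u w = dotv w u.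
Proof. by apply: eq_bigr => i _; rewrite mulrC. Qed.

Lemma dotvDl u w x : dotv (u + w) x = dotv u x + dotv w x.
Proof. by rewrite /dotv -big_split; apply: eq_bigr => i _; rewrite mxE mulrDl. Qed.

Lemma dotvZl (a : R) u x : dotv (a *: u) x = a * dotv u x.
Proof. by rewrite /dotv mulr_sumr; apply: eq_bigr => i _; rewrite mxE mulrA. Qed.

Lemma dotvNl u x : dotv (- u) x = - dotv u x.
Proof. by rewrite -scaleN1r dotvZl mulN1r. Qed.

Lemma dotvDr u w x : dotv x (u + w) = dotv x u + dotv x w.
Proof. by rewrite dotvC dotvDl !(dotvC x). Qed.

Lemma dotvZr (a : R) u x : dotv x (a *: u) = a * dotv x u.
Proof. by rewrite dotvC dotvZl dotvC. Qed.

Lemma dotvNr u x : dotv x (- u) = - dotv x u.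
Proof. by rewrite dotvC dotvNl dotvC. Qed.

Lemma dotv0r x : dotv x 0 = 0.
Proof. by rewrite /dotv big1 // => i _; rewrite mxE mulr0. Qed.

Lemma dotv0l x : dotv 0 x = 0.
Proof. by rewrite dotvC dotv0r. Qed.

Lemma dotvv_ge0 u : 0 <= dotv u u.
Proof. by apply: sumr_ge0 => i _; rewrite -expr2 sqr_ge0. Qed.

Lemma dotv_deltal (i : 'I_n) x : dotv (delta_mx i 0) x = x i 0.
Proof.
rewrite /dotv (bigD1 i) //= big1 ?addr0; first by rewrite mxE !eqxx mul1r.
by move=> j hj; rewrite mxE (negbTE hj) mul0r.
Qed.

End InnerProduct.

Section QuadraticForm.
Variables (R : realType) (n : nat).
Implicit Types (w x e p z : 'cV[R]_n) (A : 'M[R]_n).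

Lemma qformE A z : qform A z = dotv z (A *m z).
Proof. by rewrite /qform -mulmxA dotvE. Qed.

Lemma qform0 A : qform A 0 = 0.
Proof. by rewrite qformE mulmx0 dotv0r. Qed.

Lemma qformZ A (a : R) z : qform A (a *: z) = a ^+ 2 * qform A z.
Proof. by rewrite !qformE -scalemxAr dotvZl dotvZr mulrA expr2. Qed.

Lemma dotv_mulmxC A z w : A^T = A -> dotv z (A *m w) = dotv w (A *m z).
Proof.
move=> A_sym; rewrite !dotvE -[in LHS](trmxK (z^T *m _)) [LHS]mxE.
by rewrite !trmx_mul trmxK A_sym mulmxA.
Qed.

Lemma posdef_qform_ge0 A : posdef A -> forall x, 0 <= qform A x.
Proof.
move=> A_pd x; have [->|x_neq0] := eqVneq x 0; first by rewrite qform0.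
exact/ltW/A_pd.
Qed.

Lemma posdef_unitmx A : posdef A -> A \in unitmx.
Proof.
move=> A_pd; rewrite -unitmx_tr unitmxE unitfE.
apply/negP => /det0P[x x_neq0 hx].
have /A_pd : x^T != 0 by apply: contra x_neq0 => /eqP h; rewrite -(trmxK x) h linear0.
rewrite qformE.
have -> : A *m x^T = 0 by rewrite -(trmxK A) -trmx_mul hx linear0.
by rewrite dotv0r ltxx.
Qed.

Lemma qform_invmx A e : A \in unitmx -> qform (invmx A) e = qform A (invmx A *m e).
Proof. by move=> A_unit; rewrite !qformE mulKVmx // dotvC. Qed.

Lemma qform_complete_square A p z : A^T = A -> A \in unitmx ->
  2^-1 * qform A z - dotv z p =
  - 2^-1 * qform (invmx A) p + 2^-1 * qform A (z - invmx A *m p).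
Proof.
move=> A_sym A_unit; rewrite qform_invmx // !qformE mulmxBr mulKVmx //.
rewrite !(dotvDl, dotvNl, dotvDr, dotvNr) (dotv_mulmxC (invmx A *m p) z A_sym) mulKVmx //.
lra.
Qed.

Section PositiveDefinite.
Variable A : 'M[R]_n.
Hypotheses (A_sym : A^T = A) (A_pd : posdef A).

Lemma posdef_invmx : posdef (invmx A).
Proof.
have A_unit := posdef_unitmx A_pd.
move=> e e_neq0; rewrite qform_invmx //; apply: A_pd.
by apply: contra e_neq0 => /eqP h; rewrite -(mulKVmx A_unit e) h mulmx0.
Qed.

Lemma qform_dotv_lb (b : R) e w :
  - 2^-1 * b ^+ 2 * qform (invmx A) e <= 2^-1 * qform A w + b * dotv e w.
Proof.
have := qform_complete_square (- b *: e) w A_sym (posdef_unitmx A_pd).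
rewrite dotvZr dotvC qformZ sqrrN.
have := posdef_qform_ge0 A_pd (w - invmx A *m (- b *: e)); lra.
Qed.

Lemma dotv_sqr_le_qform e x :
  dotv e x ^+ 2 <= qform (invmx A) e * qform A x.
Proof.
have [->|e_neq0] := eqVneq e 0; first by rewrite dotv0l qform0 expr0n mul0r.
have g_gt0 := posdef_invmx e_neq0; set g := qform (invmx A) e in g_gt0 *.
set s := dotv e x; set q := qform A x.
have := qform_dotv_lb (- (s / g)) e x; rewrite -/g -/s -/q -(ler_pM2l g_gt0).
have -> : g * (- 2^-1 * (- (s / g)) ^+ 2 * g) = - 2^-1 * s ^+ 2 by field; rewrite gt_eqF.
have -> : g * (2^-1 * q + - (s / g) * s) = 2^-1 * (g * q) - s ^+ 2 by field; rewrite gt_eqF.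
lra.
Qed.

Lemma qform_dominates_coord_sqr (i : 'I_n) (t : R) x :
  4 * qform (invmx A) (delta_mx i 0) * `|t| <= 1 -> - qform A x <= 4 * t * x i 0 ^+ 2.
Proof.
move=> t_small; have := dotv_sqr_le_qform (delta_mx i 0) x; rewrite dotv_deltal.
set g := qform _ (delta_mx i 0) in t_small *; set q := qform A x => xi_le.
have h1 : 0 <= (g * q - x i 0 ^+ 2) * `|t| by rewrite mulr_ge0 // subr_ge0.
have h2 : 0 <= (1 - 4 * g * `|t|) * q by rewrite mulr_ge0 ?subr_ge0 ?posdef_qform_ge0.
have h3 : 0 <= x i 0 ^+ 2 * (`|t| + t).
  by rewrite mulr_ge0 ?sqr_ge0 // -lerBlDr sub0r -normrN ler_norm.
nra.
Qed.

End PositiveDefinite.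

End QuadraticForm.

Section Duality.
Variables (R : realType) (n : nat) (Q : 'M[R]_n) (c v : 'cV[R]_n) (Vc beta : R).
Hypothesis Q_sym : Q^T = Q.
Implicit Types (z sigma : 'cV[R]_n) (tau t : R).

Lemma sqsubE z (i : 'I_n) : sqsub z i 0 = z i 0 ^+ 2 - z i 0.
Proof. by rewrite mxE. Qed.

Lemma sqsub_eq0 z : (forall i, z i 0 = 0 \/ z i 0 = 1) -> sqsub z = 0.
Proof.
move=> z01; apply/matrixP => i j; rewrite (ord1 j) sqsubE mxE.
by case: (z01 i) => ->; rewrite ?expr0n ?expr1n subrr.
Qed.


Lemma tr_Gm sigma : (Gm Q sigma)^T = Gm Q sigma.
Proof. by rewrite /Gm linearD linearZ /= tr_diag_mx Q_sym. Qed.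

Lemma qform_Gm sigma z :
  qform (Gm Q sigma) z = qform Q z + 2 * (dotv sigma (sqsub z) + dotv sigma z).
Proof.
rewrite !qformE /Gm mulmxDl dotvDr -scalemxAl dotvZr; congr (_ + _ * _).
rewrite mul_diag_mx /dotv -big_split; apply: eq_bigr => i _.
rewrite !mxE /=; ring.
Qed.

Lemma XiE z sigma tau :
  Xi Q c v Vc beta z sigma tau =
  Pq Q c z + dotv sigma (sqsub z) - 2^-1 * beta^-1 * dotv sigma sigma
  + tau * (dotv v z - Vc).
Proof.
rewrite /Xi /Pq qform_Gm /psi !(dotvDr, dotvNr, dotvZr).
rewrite (dotvC z c) (dotvC z v) (dotvC z sigma); lra.
Qed.

Lemma Pbeta_Pq z : sqsub z = 0 -> Pbeta Q c beta z = Pq Q c z.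
Proof. by move=> z_bin; rewrite /Pbeta z_bin dotv0r mulr0 addr0. Qed.

Lemma Xi_tauD z sigma tau t :
  Xi Q c v Vc beta z sigma (tau + t) =
  Xi Q c v Vc beta z sigma tau + t * (dotv v z - Vc).
Proof. by rewrite !XiE; ring. Qed.

Lemma Xi_sigmaD z sigma tau (i : 'I_n) t :
  Xi Q c v Vc beta z (sigma + t *: delta_mx i 0) tau =
  Xi Q c v Vc beta z sigma tau + t * (sqsub z i 0 - beta^-1 * sigma i 0)
  - 2^-1 * beta^-1 * t ^+ 2.
Proof.
rewrite !XiE !(dotvDl, dotvZl, dotvDr, dotvZr) !dotv_deltal (dotvC sigma (delta_mx i 0)).
rewrite dotv_deltal [delta_mx i 0 i 0]mxE !eqxx /= mulr1; lra.
Qed.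

Lemma Xi_Pdbeta z sigma tau : Gm Q sigma \in unitmx ->
  Xi Q c v Vc beta z sigma tau = Pdbeta Q c v Vc beta sigma tau
     + 2^-1 * qform (Gm Q sigma) (z - zsol Q c v sigma tau).
Proof.
move=> G_unit; have := qform_complete_square (psi c v sigma tau) z (tr_Gm sigma) G_unit.
rewrite /Xi /Pdbeta /zsol; lra.
Qed.

Lemma Pdbeta_Xi_zsol sigma tau : Gm Q sigma \in unitmx ->
  Pdbeta Q c v Vc beta sigma tau =
  Xi Q c v Vc beta (zsol Q c v sigma tau) sigma tau.
Proof. by move=> G_unit; rewrite Xi_Pdbeta // subrr qform0 mulr0 addr0. Qed.

Lemma Xi_le_Pbeta z sigma tau : 0 < beta -> 0 <= tau -> Zb v Vc z ->
  Xi Q c v Vc beta z sigma tau <= Pbeta Q c beta z.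
Proof.
rewrite /Zb => beta_gt0 tau_ge0 z_Zb; rewrite XiE /Pbeta.
set s2 := dotv (sqsub z) (sqsub z); set sg2 := dotv sigma sigma.
have am_gm : dotv sigma (sqsub z) - 2^-1 * beta^-1 * sg2 <= 2^-1 * beta * s2.
  rewrite -subr_ge0.
  have -> : 2^-1 * beta * s2 - (dotv sigma (sqsub z) - 2^-1 * beta^-1 * sg2) =
      (2 * beta)^-1 * dotv (sigma - beta *: sqsub z) (sigma - beta *: sqsub z).
    rewrite !(dotvDl, dotvNl, dotvZl, dotvDr, dotvNr, dotvZr) (dotvC (sqsub z)) /s2 /sg2.
    by field; rewrite gt_eqF.
  by rewrite mulr_ge0 ?dotvv_ge0 // invr_ge0 mulr_ge0 // ltW.
have : tau * (dotv v z - Vc) <= 0 by rewrite mulr_ge0_le0 // subr_le0.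
lra.
Qed.

Lemma Xi_eq_Pbeta z sigma tau :
  beta != 0 -> sigma = beta *: sqsub z -> dotv v z = Vc ->
  Xi Q c v Vc beta z sigma tau = Pbeta Q c beta z.
Proof.
move=> beta_neq0 -> budget; rewrite XiE budget subrr mulr0 addr0 /Pbeta.
by rewrite !(dotvZl, dotvZr); field.
Qed.

Lemma posdef_Gm_delta sigma (i : 'I_n) t :
  posdef (Gm Q sigma) ->
  4 * qform (invmx (Gm Q sigma)) (delta_mx i 0) * `|t| <= 1 ->
  posdef (Gm Q (sigma + t *: delta_mx i 0)).
Proof.
move=> G_pd t_small x x_neq0.
have -> : qform (Gm Q (sigma + t *: delta_mx i 0)) x =
          qform (Gm Q sigma) x + 2 * t * x i 0 ^+ 2.
  by rewrite !qform_Gm !(dotvDl, dotvZl) !dotv_deltal mxE; ring.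
have := qform_dominates_coord_sqr (tr_Gm sigma) G_pd x t_small.
have := G_pd x x_neq0; lra.
Qed.

End Duality.

Section DualMaximizer.
Variables (R : realType) (n : nat) (Q : 'M[R]_n) (c v : 'cV[R]_n) (Vc beta : R).
Variables (sigb : 'cV[R]_n) (taub : R).
Hypotheses (Q_sym : Q^T = Q) (beta_gt0 : 0 < beta) (Sb : Saplus Q sigb taub).
Hypothesis Pdbeta_max : forall sigma tau, Saplus Q sigma tau ->
  Pdbeta Q c v Vc beta sigma tau <= Pdbeta Q c v Vc beta sigb taub.

Local Notation zb := (zsol Q c v sigb taub).

Lemma Xi_zsol_le_max sigma tau : Saplus Q sigma tau ->
  Xi Q c v Vc beta (zsol Q c v sigma tau) sigma tau
  + 2^-1 * qform (Gm Q sigb) (zsol Q c v sigma tau - zb)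
  <= Xi Q c v Vc beta (zsol Q c v sigma tau) sigb taub.
Proof.
move=> S; have [/posdef_unitmx G_unit _] := S; have [/posdef_unitmx Gb_unit _] := Sb.
have := Pdbeta_max S; rewrite (Pdbeta_Xi_zsol c v Vc beta Q_sym tau G_unit).
rewrite (Xi_Pdbeta c v Vc beta Q_sym (zsol Q c v sigma tau) taub Gb_unit); lra.
Qed.

Lemma dotv_zsol_max : dotv v zb = Vc.
Proof.
have [G_pd taub_gt0] := Sb; have G_sym := tr_Gm Q_sym sigb.
apply/eqP; rewrite -subr_eq0; apply/eqP.
apply: (@eq0_of_lin_le_sqr _ (taub / 2) (2^-1 * qform (invmx (Gm Q sigb)) v)).
  lra.
move=> t /andP[t_ge t_le].
have S : Saplus Q sigb (taub + t) by split => //; lra.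
have := Xi_zsol_le_max S; rewrite Xi_tauD.
set w := zsol Q c v sigb (taub + t) - zb.
have -> : zsol Q c v sigb (taub + t) = zb + w by rewrite subrKC.
have := qform_dotv_lb G_sym G_pd t v w.
rewrite dotvDr; lra.
Qed.

Lemma sqsub_zsol_max (i : 'I_n) : sqsub zb i 0 = beta^-1 * sigb i 0.
Proof.
have [G_pd taub_gt0] := Sb; have G_sym := tr_Gm Q_sym sigb.
set e := delta_mx i 0 : 'cV[R]_n.
have e_neq0 : e != 0.
  by apply/eqP => /matrixP/(_ i 0); rewrite !mxE !eqxx /= => /eqP; rewrite oner_eq0.
have g_gt0 := posdef_invmx G_pd e_neq0.
set g := qform (invmx (Gm Q sigb)) e in g_gt0 *; set a := 2 * zb i 0 - 1.
apply/eqP; rewrite -subr_eq0; apply/eqP.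
apply: (@eq0_of_lin_le_sqr _ (4 * g)^-1 (a ^+ 2 * g + 2^-1 * beta^-1)).
  by rewrite invr_gt0 mulr_gt0.
(* Within radius [(4 g)^-1] the perturbed [G] stays positive definite and the *)
(* excess [qform G w / 2] absorbs the terms [t a w_i] and [t w_i^2].           *)
move=> t t_range; have t_small : 4 * g * `|t| <= 1.
  by rewrite -ler_pdivlMl ?mulr_gt0 // mulr1 ler_norml.
have S : Saplus Q (sigb + t *: e) taub by split => //; exact: posdef_Gm_delta.
have := Xi_zsol_le_max S; rewrite Xi_sigmaD.
set w := zsol Q c v (sigb + t *: e) taub - zb.
have -> : zsol Q c v (sigb + t *: e) taub = zb + w by rewrite subrKC.
have := qform_dotv_lb G_sym G_pd (2 * t * a) e w; rewrite dotv_deltal -/g.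
have := qform_dominates_coord_sqr G_sym G_pd w t_small.
rewrite !sqsubE [(zb + w) i 0]mxE /a; lra.
Qed.

Lemma sigma_zsol_max : sigb = beta *: sqsub zb.
Proof.
apply/matrixP => i j; rewrite (ord1 j) mxE sqsub_zsol_max mulrA.
by rewrite mulfV ?gt_eqF // mul1r.
Qed.

Lemma Pbeta_zsol_max : Pbeta Q c beta zb = Xi Q c v Vc beta zb sigb taub.
Proof.
by rewrite (Xi_eq_Pbeta _ _ _ (lt0r_neq0 beta_gt0) sigma_zsol_max dotv_zsol_max).
Qed.

Lemma Xi_zsol_max : Xi Q c v Vc beta zb sigb taub = Pdbeta Q c v Vc beta sigb taub.
Proof. by rewrite (Pdbeta_Xi_zsol c v Vc beta Q_sym) ?posdef_unitmx //; case: Sb. Qed.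

Lemma Pbeta_zsol_min z : Zb v Vc z -> Pbeta Q c beta zb <= Pbeta Q c beta z.
Proof.
move=> z_Zb; have [G_pd taub_gt0] := Sb.
rewrite Pbeta_zsol_max Xi_zsol_max.
apply: (@le_trans _ _ (Xi Q c v Vc beta z sigb taub)).
  rewrite (Xi_Pdbeta c v Vc beta Q_sym z taub (posdef_unitmx G_pd)) lerDl.
  by rewrite mulr_ge0 ?invr_ge0 ?posdef_qform_ge0.
by apply: Xi_le_Pbeta => //; exact: ltW.
Qed.

End DualMaximizer.

Theorem theorem2 (R : realType) (n : nat) (hn : (1 <= n)%N)
    (Q : 'M[R]_n) (c v : 'cV[R]_n) (Vc : R)
    (hQ : Q^T = Q) (hv : forall i, 0 <= v i 0) (hVc : 0 < Vc) :
  (forall (beta : R) (sigb : 'cV[R]_n) (taub : R),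
      0 < beta ->
      Saplus Q sigb taub ->
      (forall sig tau, Saplus Q sig tau ->
          Pdbeta Q c v Vc beta sig tau <= Pdbeta Q c v Vc beta sigb taub) ->
      Zb v Vc (zsol Q c v sigb taub) /\
      (forall z, Zb v Vc z ->
          Pbeta Q c beta (zsol Q c v sigb taub) <= Pbeta Q c beta z))
  /\
  (exists betac : R, 0 < betac /\
    forall (beta : R) (sigb : 'cV[R]_n) (taub : R),
      betac <= beta ->
      Saplus Q sigb taub ->
      (forall sig tau, Saplus Q sig tau ->
          Pdbeta Q c v Vc beta sig tau <= Pdbeta Q c v Vc beta sigb taub) ->
      Za v Vc (zsol Q c v sigb taub) ->
      let zb := zsol Q c v sigb taub in
      (forall z, Za v Vc z -> Pq Q c zb <= Pq Q c z) /\
      (forall z, Zb v Vc z -> Pbeta Q c beta zb <= Pbeta Q c beta z) /\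
      Pq Q c zb = Pbeta Q c beta zb /\
      Pbeta Q c beta zb = Xi Q c v Vc beta zb sigb taub /\
      Xi Q c v Vc beta zb sigb taub = Pdbeta Q c v Vc beta sigb taub /\
      Pdbeta Q c v Vc beta sigb taub = Pdq Q c v Vc sigb taub).
Proof.
split=> [beta sigb taub beta_gt0 Sb Pdbeta_max|].
  split; first by rewrite /Zb (dotv_zsol_max hQ Sb Pdbeta_max).
  exact: Pbeta_zsol_min.
exists 1; split=> // beta sigb taub beta_ge1 Sb Pdbeta_max [zb01 _] zb.
have beta_gt0 : 0 < beta by apply: lt_le_trans beta_ge1.
have zb_bin : sqsub zb = 0 := sqsub_eq0 zb01.
have sigb0 : sigb = 0 by rewrite (sigma_zsol_max hQ beta_gt0 Sb Pdbeta_max) zb_bin scaler0.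
split=> [z [z01 z_Zb]|].
  rewrite -(Pbeta_Pq _ _ beta zb_bin) -(Pbeta_Pq _ _ beta (sqsub_eq0 z01)).
  exact: (Pbeta_zsol_min hQ beta_gt0 Sb Pdbeta_max z_Zb).
split; first exact: Pbeta_zsol_min.
split; first by rewrite Pbeta_Pq.
split; first exact: Pbeta_zsol_max.
split; first exact: Xi_zsol_max.
by rewrite /Pdbeta /Pdq sigb0 dotv0r mulr0 subr0.
Qed.
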